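(* For $(F,t)\in U$, let $Y=Y_{F,t}$. Then for $i=1,2$ the cone $\hat C_i$ over $C_i$ with vertex $p_0=[0,\dots,0,1]$ is contained in $Y$.
   Context: $U=U_0\times\mathbb{A}^1$, where $U_0$ is the space of cubic forms $F(x_0,\dots,x_3)$ such that the curve cut out by $F$ on the quadric $x_0x_3=x_1x_2$ in $\mathbb{P}^3$ is smooth, avoids $[0,0,0,1]$, and is tangent with multiplicity $2$ to the lines $x_0=x_1=0$ and $x_0=x_2=0$. $Y_{F,t}\subset\mathbb{P}^5$ is the cubic fourfold $x_4^3-F(x_0,\dots,x_3)+x_5(x_0x_3-x_1x_2)+t\,x_0x_5^2=0$. $C_i\subset\mathbb{P}^5$ is the plane cubic $(x_0=x_i=x_5=0)\cap(x_4^3=F(x_0,\dots,x_3))$. *)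

From HB Require Import structures.
From mathcomp Require Import all_boot all_order all_algebra all_field.
From mathcomp Require Import mpoly.
Set Implicit Arguments. Unset Strict Implicit. Unset Printing Implicit Defensive.
Import Order.TTheory GRing.Theory Num.Theory.
Local Open Scope ring_scope.

(* Ground field: the complex numbers, represented by algC (algebraically
   closed of characteristic 0). Points of P^3 / P^5 are represented by
   nonzero coordinate vectors 'I_4 -> algC / 'I_6 -> algC. *)

Definition cubic_form (F : {mpoly algC[4]}) : Prop :=
  F \in [in algC[4], 3.-homog].

Definition quadQ : {mpoly algC[4]} :=
  'X_0 * 'X_3 - 'X_1 * 'X_2.

Definition vec4 (a b c d : algC) : 'I_4 -> algC :=
  fun i => nth 0 [:: a; b; c; d] i.

Definition nonzero4 (p : 'I_4 -> algC) : Prop := exists i, p i != 0.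

Definition grad (G : {mpoly algC[4]}) (p : 'I_4 -> algC) : 'I_4 -> algC :=
  fun i => (mderiv i G).@[p].

Definition lin_indep4 (u v : 'I_4 -> algC) : Prop :=
  forall a b : algC, (forall i, a * u i + b * v i = 0) -> a = 0 /\ b = 0.

Definition smooth_curve_on_quadric (F : {mpoly algC[4]}) : Prop :=
  forall p : 'I_4 -> algC, nonzero4 p ->
    quadQ.@[p] = 0 -> F.@[p] = 0 -> lin_indep4 (grad quadQ p) (grad F p).

Definition avoids_e3 (F : {mpoly algC[4]}) : Prop :=
  F.@[vec4 0 0 0 1] != 0.

(* A binary cubic g (given as a function of homogeneous coordinates (u,v)
   on a line) has intersection multiplicity exactly 2 at some point and 1 at
   another: g = k * l^2 * m with l, m non-proportional linear forms. *)
Definition tangent_mult2 (g : algC -> algC -> algC) : Prop :=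
  exists (k a b c d : algC), k != 0 /\ a * d - b * c != 0 /\
    forall u v, g u v = k * (b * u - a * v) ^+ 2 * (d * u - c * v).

Definition in_U0 (F : {mpoly algC[4]}) : Prop :=
  [/\ cubic_form F, smooth_curve_on_quadric F, avoids_e3 F,
      (* tangency to the line x0 = x1 = 0 (parametrized by [0,0,u,v]) *)
      tangent_mult2 (fun u v => F.@[vec4 0 0 u v]) &
      (* tangency to the line x0 = x2 = 0 (parametrized by [0,u,0,v]) *)
      tangent_mult2 (fun u v => F.@[vec4 0 u 0 v])].

Definition nonzero6 (z : 'I_6 -> algC) : Prop := exists i, z i != 0.

Definition c6 (k : nat) (z : 'I_6 -> algC) : algC := z (inord k).

Definition Y_eq (F : {mpoly algC[4]}) (t : algC) (z : 'I_6 -> algC) : algC :=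
  c6 4 z ^+ 3 - F.@[vec4 (c6 0 z) (c6 1 z) (c6 2 z) (c6 3 z)]
  + c6 5 z * (c6 0 z * c6 3 z - c6 1 z * c6 2 z)
  + t * c6 0 z * c6 5 z ^+ 2.

Definition in_Y (F : {mpoly algC[4]}) (t : algC) (z : 'I_6 -> algC) : Prop :=
  nonzero6 z /\ Y_eq F t z = 0.

Definition in_C (F : {mpoly algC[4]}) (i : nat) (z : 'I_6 -> algC) : Prop :=
  [/\ nonzero6 z, c6 0 z = 0, c6 i z = 0, c6 5 z = 0 &
      c6 4 z ^+ 3 = F.@[vec4 (c6 0 z) (c6 1 z) (c6 2 z) (c6 3 z)]].

Definition p0 : 'I_6 -> algC := fun j => if val j == 5%N then 1 else 0.

Definition in_cone (C : ('I_6 -> algC) -> Prop) (p z : 'I_6 -> algC) : Prop :=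
  nonzero6 z /\ exists (c : 'I_6 -> algC) (lam mu : algC),
    C c /\ forall j, z j = lam * c j + mu * p j.

(* On the cone over C_i with vertex p0 = [0:...:0:1] we have x0 = x_i = 0, so
   both terms of Y involving x5, namely x5 (x0 x3 - x1 x2) and t x0 x5^2,
   vanish.  What remains, x4^3 - F(x0,...,x3), is a cubic form in x0,...,x4
   only; these coordinates of a point lam c + mu p0 of the cone are lam times
   those of c in C_i, where the form vanishes by definition of C_i. *)

From HB Require Import structures.
From mathcomp Require Import all_boot all_order all_algebra all_field.
From mathcomp Require Import mpoly.
Set Implicit Arguments. Unset Strict Implicit. Unset Printing Implicit Defensive.
Local Open Scope ring_scope.
Import GRing.Theory.

Lemma meval_scale_dhomog (R : comNzRingType) (n d : nat) (p : {mpoly R[n]})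
    (lam : R) (v : 'I_n -> R) :
  p \is d.-homog -> p.@[fun i => lam * v i] = lam ^+ d * p.@[v].
Proof.
move=> /dhomogP homp; rewrite !mevalE big_distrr /=.
apply: eq_big_seq => m /homp degm; rewrite /= mdegE in degm.
under eq_bigr do rewrite exprMn.
by rewrite big_split /= prodrXr degm mulrCA.
Qed.

Lemma vec4_scale (lam a b c d : algC) :
  vec4 (lam * a) (lam * b) (lam * c) (lam * d) =1
  (fun j => lam * vec4 a b c d j).
Proof. by case=> [[|[|[|[|j]]]] ?] //=; rewrite mulr0. Qed.

Lemma c6_cone_p0 (z c : 'I_6 -> algC) (lam mu : algC) (k : nat) :
  (forall j, z j = lam * c j + mu * p0 j) -> (k < 5)%N ->
  c6 k z = lam * c6 k c.
Proof.
move=> defz k_lt5; rewrite /c6 defz /p0 /= inordK; last exact: ltnW.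
by rewrite (ltn_eqF k_lt5) mulr0 addr0.
Qed.

Lemma Y_eq_x0_x1x2_eq0 (F : {mpoly algC[4]}) (t : algC) (z : 'I_6 -> algC) :
  c6 0 z = 0 -> c6 1 z * c6 2 z = 0 ->
  Y_eq F t z = c6 4 z ^+ 3 - F.@[vec4 (c6 0 z) (c6 1 z) (c6 2 z) (c6 3 z)].
Proof.
move=> z0 z12; rewrite /Y_eq z12 [in c6 0 z * _]z0 [in t * _]z0.
by rewrite mul0r subrr !mulr0 mul0r !addr0.
Qed.

Theorem lemma5p3 (F : {mpoly algC[4]}) (t : algC) :
  in_U0 F ->
  forall i : nat, (i = 1%N \/ i = 2%N) ->
  forall z : 'I_6 -> algC, in_cone (in_C F i) p0 z -> in_Y F t z.
Proof.
move=> [cubicF _ _ _ _] i i12 z [nz_z [c [lam [mu [[_ c0 ci _ c4] defz]]]]].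
split=> //.
have zk k : (k < 5)%N -> c6 k z = lam * c6 k c by exact: c6_cone_p0.
have z0 : c6 0 z = 0 by rewrite zk // c0 mulr0.
have z12 : c6 1 z * c6 2 z = 0.
  by rewrite !zk //; case: i12 ci => -> ->; rewrite mulr0 ?mul0r ?mulr0.
rewrite Y_eq_x0_x1x2_eq0 // !zk // (meval_eq _ (vec4_scale _ _ _ _ _)).
by rewrite (meval_scale_dhomog lam _ cubicF) -c4 exprMn subrr.
Qed.
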